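(* Let $\bar{\mathcal{L}}$ be the Laplacian of an undirected connected graph on $N\ge2$ nodes, let $\eta\ge0$, $\gamma\in\mathbb{R}$, and let $\bar P\in\mathbb{R}^{Nn\times Nn}$, $Q\in\mathbb{R}^{n\times n}$, $R\in\mathbb{R}^{m\times m}$ be symmetric positive definite. Consider the error dynamics when all agents are connected, $$\dot e(t)=\big(\bar F-\eta(\bar{\mathcal{L}}\otimes I_n)\big)e(t)+\mathcal{I}w(t)-\bar Jv(t),\qquad w(t)^TQw(t)\le1,\ v(t)^TRv(t)\le1.$$ If there exists $\alpha_3\ge0$ such that, with $M=\bar E^T\bar P\bar E$, $$\begin{bmatrix}(\gamma-2\alpha_3)M-\bar A_e^TM-M\bar A_e & -M\bar W & M\bar V\\ -\bar W^TM & \alpha_3Q & 0\\ \bar V^TM & 0 & \alpha_3R\end{bmatrix}\succ0,$$ then this error system is quadratically $\gamma$-bounded with Lyapunov matrix $\bar P$, i.e. whenever $w(t)^TQw(t)\le1$, $v(t)^TRv(t)\le1$ and $e(t)^T\bar Pe(t)\ge1$, one has $\frac{d}{dt}(e(t)^T\bar Pe(t))<\gamma\, e(t)^T\bar Pe(t)$.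
   Context: Data: $A\in\mathbb{R}^{n\times n}$; $B=[B_1\ \cdots\ B_N]$, $B_i\in\mathbb{R}^{n\times p_i}$; $K_i\in\mathbb{R}^{p_i\times n}$, $K=[K_1^T\cdots K_N^T]^T$; $A_{bk}=A+BK$; $C=[C_1^T\cdots C_N^T]^T$, $C_i\in\mathbb{R}^{m_i\times n}$, $m=\sum_im_i$; $L_i\in\mathbb{R}^{n\times m_i}$, $L=[L_1\ \cdots\ L_N]$. Define $\mathcal{I}=[I_n\ \cdots\ I_n]^T\in\mathbb{R}^{Nn\times n}$; $\bar J=N\,\mathrm{BlkDiag}(L_1,\dots,L_N)$; $\bar F$ the $N\times N$ block matrix with $(i,i)$ block $A_{bk}-NL_iC_i-B_iK_i$ and $(i,j)$ block $-B_jK_j$ for $i\ne j$; $H=[\tfrac1NA_{bk}-B_1K_1-L_1C_1\ \cdots\ \tfrac1NA_{bk}-B_NK_N-L_NC_N]\in\mathbb{R}^{n\times Nn}$. Let $S\in\mathbb{R}^{N\times(N-1)}$ satisfy $1_N^TS=0$, $S^TS=I_{N-1}$, $S^T\bar{\mathcal{L}}S=\Lambda^+$, where $\Lambda^+$ is the diagonal matrix of the positive eigenvalues of $\bar{\mathcal{L}}$ ($1_N$ is the all-ones vector). Set $\bar E=[\mathcal{I}\ \ S\otimes I_n]$, $$\bar A_e=\begin{bmatrix}A-LC & H(S\otimes I_n)\\ (S^T\otimes I_n)\bar F\mathcal{I} & (S^T\otimes I_n)\bar F(S\otimes I_n)-\eta(\Lambda^+\otimes I_n)\end{bmatrix},\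 \bar W=\begin{bmatrix}I_n\\(S^T\otimes I_n)\mathcal{I}\end{bmatrix},\ \bar V=\begin{bmatrix}L\\(S^T\otimes I_n)\bar J\end{bmatrix}.$$ *)

From HB Require Import structures.
From mathcomp Require Import all_boot all_order all_algebra.
Set Implicit Arguments. Unset Strict Implicit. Unset Printing Implicit Defensive.
Import Order.TTheory GRing.Theory Num.Theory.
Local Open Scope ring_scope.

Section Defs.
Variable R : realFieldType.

Definition posdef (k : nat) (X : 'M[R]_k) : Prop :=
  X^T = X /\ forall x : 'cV[R]_k, x != 0 -> 0 < (x^T *m X *m x) 0 0.

Definition qf (k : nat) (X : 'M[R]_k) (x : 'cV[R]_k) : R := (x^T *m X *m x) 0 0.

Definition laplacian (N : nat) (adj : rel 'I_N) : 'M[R]_N :=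
  \matrix_(i, j) (if i == j then (#|[set k | adj i k]|)%:R else - (adj i j)%:R).

Definition undirected_graph (N : nat) (adj : rel 'I_N) : Prop :=
  symmetric adj /\ irreflexive adj.

Definition connected_graph (N : nat) (adj : rel 'I_N) : Prop :=
  forall i j, connect adj i j.

Definition kronI (a b n : nat) (X : 'M[R]_(a, b)) :
  'M[R]_(\sum_(i < a) n, \sum_(j < b) n) :=
  \mxblock_(i < a, j < b) ((X i j)%:M : 'M[R]_n).

Definition Ical (N n : nat) : 'M[R]_(\sum_(i < N) n, n) :=
  \mxcol_(i < N) (1%:M : 'M[R]_n).

Variables (N n : nat) (p mm : 'I_N -> nat).
Variables (A : 'M[R]_n) (B : forall i, 'M[R]_(n, p i)) (K : forall i, 'M[R]_(p i, n))
          (C : forall i, 'M[R]_(mm i, n)) (L : forall i, 'M[R]_(n, mm i)).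

Definition Bfull : 'M[R]_(n, \sum_i p i) := \mxrow_(i < N) B i.
Definition Kfull : 'M[R]_(\sum_i p i, n) := \mxcol_(i < N) K i.
Definition Cfull : 'M[R]_(\sum_i mm i, n) := \mxcol_(i < N) C i.
Definition Lfull : 'M[R]_(n, \sum_i mm i) := \mxrow_(i < N) L i.

Definition Abk : 'M[R]_n := A + Bfull *m Kfull.

Definition Jbar : 'M[R]_(\sum_(i < N) n, \sum_i mm i) :=
  N%:R *: \mxblock_(i < N, j < N) ((i == j)%:R *: L j).

Definition Fbar : 'M[R]_(\sum_(i < N) n, \sum_(j < N) n) :=
  \mxblock_(i < N, j < N)
    (if i == j then Abk - N%:R *: (L i *m C i) - B i *m K i
     else - (B j *m K j)).

Definition Hmat : 'M[R]_(n, \sum_(j < N) n) :=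
  \mxrow_(j < N) ((N%:R)^-1 *: Abk - B j *m K j - L j *m C j).

Variables (S : 'M[R]_(N, N.-1)) (Lam : 'M[R]_N.-1) (eta : R).

Definition SI := kronI n S.

Definition Ebar : 'M[R]_(\sum_(i < N) n, n + \sum_(j < N.-1) n) :=
  row_mx (Ical N n) SI.

Definition Aebar : 'M[R]_(n + \sum_(j < N.-1) n) :=
  block_mx (A - Lfull *m Cfull) (Hmat *m SI)
           (SI^T *m Fbar *m Ical N n) (SI^T *m Fbar *m SI - eta *: kronI n Lam).

Definition Wbar : 'M[R]_(n + \sum_(j < N.-1) n, n) :=
  col_mx 1%:M (SI^T *m Ical N n).

Definition Vbar : 'M[R]_(n + \sum_(j < N.-1) n, \sum_i mm i) :=
  col_mx Lfull (SI^T *m Jbar).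

Variables (Pbar : 'M[R]_(\sum_(i < N) n)) (Q : 'M[R]_n) (Rw : 'M[R]_(\sum_i mm i))
          (gamma alpha3 : R).

Definition Mmat := Ebar^T *m Pbar *m Ebar.

Definition LMI : 'M[R]_((n + \sum_(j < N.-1) n) + (n + \sum_i mm i)) :=
  block_mx ((gamma - 2 * alpha3) *: Mmat - Aebar^T *m Mmat - Mmat *m Aebar)
           (row_mx (- (Mmat *m Wbar)) (Mmat *m Vbar))
           (col_mx (- (Wbar^T *m Mmat)) (Vbar^T *m Mmat))
           (block_mx (alpha3 *: Q) 0 0 (alpha3 *: Rw)).

End Defs.

From HB Require Import structures.
From mathcomp Require Import all_boot all_order all_algebra.
From mathcomp Require Import ring lra.
Set Implicit Arguments. Unset Strict Implicit. Unset Printing Implicit Defensive.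
Import Order.TTheory GRing.Theory Num.Theory.
Local Open Scope ring_scope.

(* Since [S] is an orthonormal basis of the orthogonal complement of [1_N],
   [Ebar = [Ical, S (x) I_n]] is invertible, with inverse
   [col_mx (Ical^T / N) (S (x) I_n)^T].  In the
   coordinates [z = Ebar^-1 e] the error dynamics become
   [zdot = Aebar z + Wbar w - Vbar v], and [e^T Pbar e = z^T M z].  The LMI,
   evaluated at [(z, w, v)], then is an S-procedure certificate: it bounds
   the derivative by [gamma z^T M z - alpha3 (2 z^T M z - w^T Q w - v^T R v)],
   and the bracket is nonnegative under the three quadratic constraints. *)

Section Kronecker.
Variables (R : realFieldType) (n : nat).

Lemma mul_kronI a b c (X : 'M[R]_(a, b)) (Y : 'M[R]_(b, c)) :
  kronI n X *m kronI n Y = kronI n (X *m Y).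
Proof.
rewrite /kronI mul_mxblock; apply: eq_mxblock => i k.
rewrite mxE raddf_sum /=; apply: eq_bigr => j _.
by rewrite mul_scalar_mx scale_scalar_mx.
Qed.

Lemma tr_kronI a b (X : 'M[R]_(a, b)) : (kronI n X)^T = kronI n X^T.
Proof.
by rewrite /kronI tr_mxblock; apply: eq_mxblock => i j; rewrite tr_scalar_mx mxE.
Qed.

Lemma kronID a b (X Y : 'M[R]_(a, b)) : kronI n (X + Y) = kronI n X + kronI n Y.
Proof. by apply/matrixP => s t; rewrite !mxE mulrnDl. Qed.

Lemma kronIZ a b c (X : 'M[R]_(a, b)) : kronI n (c *: X) = c *: kronI n X.
Proof. by apply/matrixP => s t; rewrite !mxE mulrnAr. Qed.

Lemma kronI1 a : kronI n (1%:M : 'M[R]_a) = 1%:M.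
Proof.
rewrite -(mxdiagZ (p_ := fun _ : 'I_a => n) 1) /kronI /mxdiag.
apply: eq_mxblock => i j; rewrite mxE; case: (i == j); last by rewrite raddf0.
by rewrite conform_mx_id.
Qed.

Lemma scale_mxrow m N (q : 'I_N -> nat) c (X : forall j, 'M[R]_(m, q j)) :
  c *: \mxrow_j X j = \mxrow_j (c *: X j).
Proof. by apply/matrixP => a b; rewrite !mxE. Qed.

Lemma tr_Ical N : (Ical R N n)^T = \mxrow_(i < N) (1%:M : 'M[R]_n).
Proof. by rewrite /Ical tr_mxcol; apply: eq_mxrow => i; rewrite tr_scalar_mx. Qed.

Lemma mul_Ical_tr N : Ical R N n *m (Ical R N n)^T = kronI n (const_mx 1 : 'M[R]_N).
Proof.
rewrite tr_Ical /Ical mul_mxcol_mxrow /kronI; apply: eq_mxblock => i j.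
by rewrite mul1mx mxE.
Qed.

Lemma mul_tr_Ical N : (Ical R N n)^T *m Ical R N n = N%:R *: (1%:M : 'M[R]_n).
Proof.
rewrite tr_Ical /Ical mul_mxrow_mxcol scaler_nat.
under eq_bigr do rewrite mul1mx.
by rewrite sumr_const card_ord.
Qed.

Lemma mul_tr_Ical_kronI N b (X : 'M[R]_(N, b)) :
  (Ical R N n)^T *m kronI n X = \mxrow_j ((\sum_i X i j)%:M : 'M[R]_n).
Proof.
rewrite tr_Ical /kronI mul_mxrow_mxblock; apply: eq_mxrow => j.
by rewrite raddf_sum; apply: eq_bigr => i _; rewrite mul1mx.
Qed.

Lemma mul_kronI_Ical N a (X : 'M[R]_(a, N)) :
  kronI n X *m Ical R N n = \mxcol_i ((\sum_j X i j)%:M : 'M[R]_n).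
Proof.
rewrite /Ical /kronI mul_mxblock_mxrow; apply: eq_mxcol => i.
by rewrite raddf_sum; apply: eq_bigr => j _; rewrite mulmx1.
Qed.

End Kronecker.

Section Laplacian.
Variables (R : realFieldType) (N : nat) (adj : rel 'I_N).
Hypothesis adj_undirected : undirected_graph adj.

Let deg i : R := \sum_k (adj i k)%:R.

Lemma laplacianE i j : laplacian R adj i j = (i == j)%:R * deg i - (adj i j)%:R.
Proof.
have [_ adj_irr] := adj_undirected.
rewrite mxE; case: eqP => [<-|_]; last by rewrite mul0r sub0r.
rewrite adj_irr subr0 mul1r /deg -natr_sum cardsE -sum1_card big_mkcond /=.
by congr (_%:R); apply: eq_bigr => k _; rewrite -topredE /=; case: (adj i k).
Qed.

Lemma laplacian_row_sum i : \sum_j laplacian R adj i j = 0.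
Proof.
under eq_bigr do rewrite laplacianE.
rewrite sumrB (bigD1 i) //= eqxx mul1r big1 ?addr0 ?subrr //.
by move=> j /negbTE; rewrite eq_sym => ->; rewrite mul0r.
Qed.

Lemma laplacian_col_sum j : \sum_i laplacian R adj i j = 0.
Proof.
have [adj_sym _] := adj_undirected.
under eq_bigr do rewrite laplacianE.
rewrite sumrB (bigD1 j) //= eqxx mul1r big1 ?addr0.
  by rewrite /deg; under eq_bigr do rewrite adj_sym; rewrite subrr.
by move=> i /negbTE ->; rewrite mul0r.
Qed.

End Laplacian.

(* [S S^T] is the orthogonal projector onto the complement of [1_N]: the
   square matrix [U = col_mx 1_N^T S^T] has orthogonal rows, hence full rank,
   and it annihilates [1 - 1_N 1_N^T / N - S S^T]. *)
Lemma orthonormal_complement_projector (R : realFieldType) (N : nat)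
    (S : 'M[R]_(N, N.-1)) :
  (0 < N)%N -> (const_mx 1 : 'rV[R]_N) *m S = 0 -> S^T *m S = 1%:M ->
  S *m S^T = 1%:M - N%:R^-1 *: const_mx 1.
Proof.
move=> N_gt0 oneS StS.
have NR : (N%:R : R) != 0 by rewrite pnatr_eq0 -lt0n.
set c := (const_mx 1 : 'rV[R]_N).
have ccT : c *m c^T = (N%:R)%:M.
  apply/matrixP => i j; rewrite !mxE (ord1 i) (ord1 j) /=.
  under eq_bigr do rewrite !mxE mulr1.
  by rewrite sumr_const card_ord mulr1n.
have cTc : c^T *m c = const_mx 1.
  by apply/matrixP => i j; rewrite !mxE big_ord1 !mxE mulr1.
set U := col_mx c S^T.
have U_full : row_full U.
  have UUt : U *m U^T = block_mx ((N%:R)%:M : 'M[R]_1) 0 0 1%:M.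
    by rewrite /U tr_col_mx mul_col_row trmxK StS ccT oneS -trmx_mul oneS trmx0.
  set D := block_mx ((N%:R^-1)%:M : 'M[R]_1) 0 0 (1%:M : 'M[R]_N.-1).
  have DUUt : D *m U *m U^T = 1%:M.
    rewrite -mulmxA UUt /D mulmx_block !mulmx0 !mul0mx !addr0 !add0r mulmx1.
    by rewrite -scalar_mxM mulVf // scalar_mx_block.
  rewrite /row_full eqn_leq rank_leq_col -{1}(prednK N_gt0) -add1n.
  rewrite -[X in (X <= _)%N](mxrank1 R (1 + N.-1)) -DUUt.
  exact: leq_trans (mxrankM_maxl _ _) (mxrankM_maxr _ _).
have [U' U'U] := row_fullP U_full.
set X := 1%:M - N%:R^-1 *: const_mx 1 - S *m S^T.
have UX : U *m X = 0.
  rewrite /U mul_col_mx /X !mulmxBr !mulmx1 -!scalemxAr -cTc !mulmxA.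
  rewrite oneS StS ccT -trmx_mul oneS trmx0 !mul0mx mul_scalar_mx mul1mx.
  by rewrite scalerA mulVf // scale1r scaler0 !subr0 subrr addrN col_mx0.
apply/eqP; rewrite eq_sym -subr_eq0 -/X.
by rewrite -[X]mul1mx -U'U -mulmxA UX mulmx0.
Qed.

Section ChangeOfCoordinates.
Variables (R : realFieldType) (N n : nat) (p mm : 'I_N -> nat).
Variables (A : 'M[R]_n) (B : forall i, 'M[R]_(n, p i)) (K : forall i, 'M[R]_(p i, n))
          (C : forall i, 'M[R]_(mm i, n)) (L : forall i, 'M[R]_(n, mm i)).
Variables (adj : rel 'I_N) (S : 'M[R]_(N, N.-1)) (Lam : 'M[R]_N.-1) (eta : R).
Hypothesis N_gt0 : (0 < N)%N.
Hypothesis adj_undirected : undirected_graph adj.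
Hypothesis oneS : (const_mx 1 : 'rV[R]_N) *m S = 0.
Hypothesis StS : S^T *m S = 1%:M.
Hypothesis SLS : S^T *m laplacian R adj *m S = Lam.

Let NR : (N%:R : R) != 0.
Proof. by rewrite pnatr_eq0 -lt0n. Qed.

Definition Ebar_inv : 'M[R]_(n + \sum_(j < N.-1) n, \sum_(i < N) n) :=
  col_mx (N%:R^-1 *: (Ical R N n)^T) (kronI n S)^T.

Lemma Ebar_invK : Ebar n S *m Ebar_inv = 1%:M.
Proof.
rewrite /Ebar /Ebar_inv mul_row_col -scalemxAr mul_Ical_tr /SI tr_kronI mul_kronI.
rewrite orthonormal_complement_projector //.
by rewrite -kronIZ -kronID addrC subrK kronI1.
Qed.

Lemma Ebar_inv_Ical : Ebar_inv *m Ical R N n = Wbar n S.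
Proof.
by rewrite /Ebar_inv /Wbar mul_col_mx -scalemxAl mul_tr_Ical scalerA mulVf // scale1r.
Qed.

Lemma Ebar_inv_Jbar : Ebar_inv *m Jbar L = Vbar L S.
Proof.
rewrite /Ebar_inv /Vbar mul_col_mx -scalemxAl /Jbar -scalemxAr scalerA mulVf //.
rewrite scale1r tr_Ical mul_mxrow_mxblock /Lfull; congr col_mx; apply: eq_mxrow => j.
under eq_bigr do rewrite mul1mx.
rewrite (bigD1 j) //= eqxx scale1r big1 ?addr0 // => i /negbTE ->.
by rewrite scale0r.
Qed.

Lemma mul_tr_Ical_Fbar : (Ical R N n)^T *m Fbar A B K C L = N%:R *: Hmat A B K C L.
Proof.
rewrite tr_Ical /Fbar mul_mxrow_mxblock /Hmat scale_mxrow; apply: eq_mxrow => j.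
under eq_bigr do rewrite mul1mx.
rewrite (bigD1 j) //= eqxx.
rewrite (eq_bigr (fun=> - (B j *m K j))); last by move=> i /negbTE ->.
rewrite sumr_const cardC1 card_ord -scaler_nat.
have hN : (N.-1%:R : R) = N%:R - 1 by rewrite -[in RHS](prednK N_gt0) -natr1 addrK.
by apply/matrixP => a b; rewrite !mxE hN; field.
Qed.

Lemma mul_tr_Ical_kron_laplacian :
  (Ical R N n)^T *m kronI n (laplacian R adj) = 0.
Proof.
rewrite mul_tr_Ical_kronI; apply/matrixP => a b.
by rewrite !mxE laplacian_col_sum // mul0rn.
Qed.

Lemma mul_kron_laplacian_Ical : kronI n (laplacian R adj) *m Ical R N n = 0.
Proof.
rewrite mul_kronI_Ical; apply/matrixP => a b.
by rewrite !mxE laplacian_row_sum // mul0rn.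
Qed.

Lemma mul_Hmat_Ical : Hmat A B K C L *m Ical R N n = A - Lfull L *m Cfull C.
Proof.
rewrite /Hmat /Ical mul_mxrow_mxcol.
rewrite (eq_bigr (fun j => N%:R^-1 *: Abk A B K - B j *m K j - L j *m C j));
  last by move=> j _; rewrite mulmx1.
rewrite !sumrB sumr_const card_ord -scaler_nat /Abk /Lfull /Cfull /Bfull /Kfull.
by rewrite !mul_mxrow_mxcol scalerA mulfV // scale1r addrK.
Qed.

Lemma Ebar_inv_conj :
  Ebar_inv *m ((Fbar A B K C L - eta *: kronI n (laplacian R adj)) *m Ebar n S)
  = Aebar A B K C L S Lam eta.
Proof.
rewrite mulmxA /Ebar_inv /Ebar /Aebar mul_col_mx mul_col_row.
rewrite -!scalemxAl !mulmxBr mul_tr_Ical_Fbar -!scalemxAr.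
rewrite mul_tr_Ical_kron_laplacian scaler0 subr0.
rewrite -!scalemxAl !scalerA mulVf // !scale1r mul_Hmat_Ical !mulmxBl.
rewrite -!scalemxAl -!mulmxA mul_kron_laplacian_Ical mulmx0 scaler0 subr0.
by rewrite /SI tr_kronI !mulmxA !mul_kronI SLS.
Qed.

Lemma Ebar_Wbar : Ebar n S *m Wbar n S = Ical R N n.
Proof. by rewrite -Ebar_inv_Ical mulmxA Ebar_invK mul1mx. Qed.

Lemma Ebar_Vbar : Ebar n S *m Vbar L S = Jbar L.
Proof. by rewrite -Ebar_inv_Jbar mulmxA Ebar_invK mul1mx. Qed.

Lemma Ebar_Aebar :
  Ebar n S *m Aebar A B K C L S Lam eta
  = (Fbar A B K C L - eta *: kronI n (laplacian R adj)) *m Ebar n S.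
Proof. by rewrite -Ebar_inv_conj mulmxA Ebar_invK mul1mx. Qed.

End ChangeOfCoordinates.

Section LMICertificate.
Variables (R : realFieldType) (k a b : nat).

Lemma mx11D (X Y : 'M[R]_1) : (X + Y) 0 0 = X 0 0 + Y 0 0.
Proof. by rewrite mxE. Qed.

Lemma mx11N (X : 'M[R]_1) : (- X) 0 0 = - X 0 0.
Proof. by rewrite mxE. Qed.

Lemma mx11Z c (X : 'M[R]_1) : (c *: X) 0 0 = c * X 0 0.
Proof. by rewrite mxE. Qed.

Lemma trmxD m l (X Y : 'M[R]_(m, l)) : (X + Y)^T = X^T + Y^T.
Proof. exact: linearD. Qed.

Lemma trmxN m l (X : 'M[R]_(m, l)) : (- X)^T = - X^T.
Proof. exact: linearN. Qed.

Lemma lmi_quadratic_bound (M Ae : 'M[R]_k) (W : 'M[R]_(k, a)) (V : 'M[R]_(k, b))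
    (Q : 'M[R]_a) (Rw : 'M[R]_b) (gamma alpha : R) :
  0 <= alpha ->
  posdef (block_mx ((gamma - 2 * alpha) *: M - Ae^T *m M - M *m Ae)
                   (row_mx (- (M *m W)) (M *m V))
                   (col_mx (- (W^T *m M)) (V^T *m M))
                   (block_mx (alpha *: Q) 0 0 (alpha *: Rw))) ->
  forall z w v, 1 <= qf M z -> qf Q w <= 1 -> qf Rw v <= 1 ->
  ((Ae *m z + W *m w - V *m v)^T *m M *m z
   + z^T *m M *m (Ae *m z + W *m w - V *m v)) 0 0 < gamma * qf M z.
Proof.
move=> alpha_ge0 [_ lmi_pos] z w v qz qw qv.
have x_neq0 : col_mx z (col_mx w v) != 0.
  rewrite col_mx_eq0; apply/nandP; left; apply: contraTneq qz => ->.
  by rewrite /qf mulmx0 mxE ler10.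
have := lmi_pos _ x_neq0.
rewrite !tr_col_mx.
rewrite !(mul_row_block, mul_row_col, mul_mx_row, add_row_mx).
rewrite !(mulmx0, mul0mx, addr0, add0r).
move: qz qw qv; rewrite /qf !(trmxD, trmxN, trmx_mul).
rewrite !(mulmxDl, mulmxDr, mulmxBl, mulmxBr, mulmxN, mulNmx).
do 4 rewrite -?scalemxAl -?scalemxAr ?mulmxA.
rewrite !(mx11D, mx11N, mx11Z) => qz qw qv lmi.
have := qz; rewrite -subr_ge0 => /(mulr_ge0 alpha_ge0) hz.
have := qw; rewrite -subr_ge0 => /(mulr_ge0 alpha_ge0) hw.
have := qv; rewrite -subr_ge0 => /(mulr_ge0 alpha_ge0) hv.
lra.
Qed.

End LMICertificate.

Theorem lemma5 (R : realFieldType) (N n : nat) (p mm : 'I_N -> nat)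
  (A : 'M[R]_n) (B : forall i, 'M[R]_(n, p i)) (K : forall i, 'M[R]_(p i, n))
  (C : forall i, 'M[R]_(mm i, n)) (L : forall i, 'M[R]_(n, mm i))
  (adj : rel 'I_N) (S : 'M[R]_(N, N.-1)) (Lam : 'M[R]_N.-1)
  (eta gamma : R)
  (Pbar : 'M[R]_(\sum_(i < N) n)) (Q : 'M[R]_n) (Rw : 'M[R]_(\sum_i mm i)) :
  (2 <= N)%N ->
  undirected_graph adj -> connected_graph adj ->
  0 <= eta ->
  posdef Pbar -> posdef Q -> posdef Rw ->
  (const_mx 1 : 'rV[R]_N) *m S = 0 ->
  S^T *m S = 1%:M ->
  S^T *m laplacian R adj *m S = Lam ->
  is_diag_mx Lam ->
  (forall k, 0 < Lam k k /\ eigenvalue (laplacian R adj) (Lam k k)) ->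
  (exists alpha3 : R, 0 <= alpha3 /\
     posdef (LMI A B K C L S Lam eta Pbar Q Rw gamma alpha3)) ->
  forall (e : 'cV[R]_(\sum_(i < N) n)) (w : 'cV[R]_n) (v : 'cV[R]_(\sum_i mm i)),
    qf Q w <= 1 -> qf Rw v <= 1 -> 1 <= qf Pbar e ->
    let edot := (Fbar A B K C L - eta *: kronI n (laplacian R adj)) *m e
                + Ical R N n *m w - Jbar L *m v in
    (edot^T *m Pbar *m e + e^T *m Pbar *m edot) 0 0 < gamma * qf Pbar e.
Proof.
move=> N_ge2 adj_undirected _ _ _ _ _ oneS StS SLS _ _ [alpha [alpha_ge0 lmi]].
move=> e w v qw qv qe; cbv zeta.
have N_gt0 : (0 < N)%N by apply: leq_trans N_ge2.
set E := Ebar n S; set z := Ebar_inv n S *m e.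
have eE : e = E *m z by rewrite /z mulmxA Ebar_invK // mul1mx.
have qfE u u' : (E *m u)^T *m Pbar *m (E *m u') = u^T *m Mmat S Pbar *m u'.
  by rewrite trmx_mul /Mmat !mulmxA.
have edotE : (Fbar A B K C L - eta *: kronI n (laplacian R adj)) *m e
    + Ical R N n *m w - Jbar L *m v
  = E *m (Aebar A B K C L S Lam eta *m z + Wbar n S *m w - Vbar L S *m v).
  rewrite eE mulmxA -(Ebar_Aebar A B K C L eta N_gt0 adj_undirected oneS StS SLS).
  rewrite -(Ebar_Wbar n N_gt0 oneS StS) -(Ebar_Vbar L N_gt0 oneS StS).
  by rewrite mulmxBr mulmxDr !mulmxA.
move: qe; rewrite /qf edotE eE !qfE => qe.
exact: lmi_quadratic_bound alpha_ge0 lmi z w v qe qw qv.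
Qed.
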